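(* Let $X$ be a nonempty set, $f:X\to X$ a function, and $\tau_2$ the fuzzy topology on $X$ defined below. Then $f:(X,\tau_2)\to(X,\tau_2)$ is open if and only if $f$ is onto.
   Context: A fuzzy subset of $X$ is a function $\mu:X\to[0,1]$; union is the pointwise supremum, intersection the pointwise minimum; $\emptyset$ is the constant $0$ and $X$ the constant $1$. A fuzzy topology is a family of fuzzy subsets containing $\emptyset$ and $X$, closed under arbitrary unions and finite intersections; the topology generated by a base $\mathbb{B}$ consists of $\emptyset$ and all unions of subfamilies of $\mathbb{B}$. $\mathbb{N}=\{1,2,\dots\}$, $f^0=\mathrm{id}_X$, $f^{n+1}=f^n\circ f$. Definition of $\tau_2$: $J_0=\bigcap_{n\in\mathbb{N}} f^n(X)$, $J_n=f^{n-1}(X)\setminus f^n(X)$ for $n\in\mathbb{N}$; for $m\in\mathbb{N}$, $\mu_{K_m}(x)=\min\{1,n/m\}$ if $x\in J_n$ with $n\ge1$, and $\mu_{K_m}(x)=1$ otherwise; $\tau_2$ is generated by the base $\{K_m:m\in\mathbb{N}\}$. The image of a fuzzy set $A$ is $\mu_{f(A)}(y)=\sup\{\mu_A(x):f(x)=y\}$, and $0$ if $y\notin f(X)$. $f$ is open if $f(U)$ is open for every open fuzzy set $U$. *)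

From Stdlib Require Import Reals.
Open Scope R_scope.

(* Fuzzy subsets of X: membership functions X -> [0,1] (as functions X -> R). *)
Definition fuzzy (X : Type) := X -> R.

Definition fpow {X : Type} (f : X -> X) (n : nat) : X -> X := Nat.iter n f.

Definition in_fimage {X : Type} (f : X -> X) (n : nat) (x : X) : Prop :=
  exists y, fpow f n y = x.

(* x in J_n for n >= 1 : J_n = f^(n-1)(X) \ f^n(X) *)
Definition inJ {X : Type} (f : X -> X) (n : nat) (x : X) : Prop :=
  in_fimage f (n - 1) x /\ ~ in_fimage f n x.

(* Kval f m x r  :<->  mu_{K_m}(x) = r.
   mu_{K_m}(x) = min{1, n/m} if x in J_n with n >= 1, and 1 otherwise.
   (The J_n, n >= 1, are pairwise disjoint, so this determines r uniquely.) *)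
Definition Kval {X : Type} (f : X -> X) (m : nat) (x : X) (r : R) : Prop :=
  (exists n : nat, (1 <= n)%nat /\ inJ f n x /\ r = Rmin 1 (INR n / INR m))
  \/ ((forall n : nat, (1 <= n)%nat -> ~ inJ f n x) /\ r = 1).

(* U is open in tau_2: U is empty or a union (pointwise supremum) of a
   subfamily {K_m : m in S} (m ranging over N = {1,2,...}) of the base.
   Including the value 0 in the supremum accounts for the empty set / the
   empty union (all values lie in [0,1]). *)
Definition tau2_open {X : Type} (f : X -> X) (U : fuzzy X) : Prop :=
  exists S : nat -> Prop,
    forall x : X,
      is_lub (fun r => r = 0 \/
                       exists m : nat, (1 <= m)%nat /\ S m /\ Kval f m x r)
             (U x).

(* V is the image f(A): mu_V(y) = sup{mu_A(x) : f x = y}, and 0 if y not in f(X).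
   (Adding 0 to the set does not change the sup for nonnegative A and gives
   0 when the fibre is empty.) *)
Definition is_fuzzy_image {X : Type} (f : X -> X) (A V : fuzzy X) : Prop :=
  forall y : X, is_lub (fun r => r = 0 \/ exists x, f x = y /\ r = A x) (V y).

Definition tau2_open_map {X : Type} (f : X -> X) : Prop :=
  forall U : fuzzy X, tau2_open f U ->
    exists V : fuzzy X, is_fuzzy_image f U V /\ tau2_open f V.

From Stdlib Require Import Reals Lra Lia Classical.
Open Scope R_scope.

(* If f is onto, every f^n(X) is all of X, so every J_n is empty and every
   basic set K_m is the constant 1; open sets are then constants, and a
   surjection maps a constant fuzzy set onto itself.  If some y is not in
   f(X), then y lies in J_1, where every K_m is positive; the image of the
   open set X = K_1 vanishes at y, so it can only be the empty union, i.e.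
   the constant 0, yet it equals 1 at every f x. *)

Section Tau2.

Variables (X : Type) (f : X -> X).

Definition onto := forall y : X, exists x : X, f x = y.

Lemma in_fimage_onto : onto -> forall n x, in_fimage f n x.
Proof.
  intros Hon n; induction n as [|n IH]; intros x.
  - exists x; reflexivity.
  - destruct (Hon x) as [z <-]. destruct (IH z) as [w Hw].
    exists w. unfold fpow in *; simpl. now rewrite Hw.
Qed.

Lemma Kval_onto : onto -> forall m x r, Kval f m x r <-> r = 1.
Proof.
  intros Hon m x r; split.
  - intros [[n [_ [[_ HJ] _]]] | [_ Hr]]; [|exact Hr].
    exfalso; apply HJ, in_fimage_onto, Hon.
  - intros ->. right. split; [|reflexivity].
    intros n _ [_ HJ]; apply HJ, in_fimage_onto, Hon.
Qed.

Lemma Kval_one x r : Kval f 1 x r <-> r = 1.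
Proof.
  assert (Hmin : forall n, (1 <= n)%nat -> Rmin 1 (INR n / INR 1) = 1).
  { intros n Hn. apply le_INR in Hn. simpl in *.
    apply Rmin_left. unfold Rdiv; rewrite Rinv_1; lra. }
  split.
  - intros [[n [Hn [_ ->]]] | [_ ->]]; [exact (Hmin n Hn)|reflexivity].
  - intros ->.
    destruct (classic (exists n, (1 <= n)%nat /\ inJ f n x)) as [[n [Hn HJ]]|HnJ].
    + left. exists n. split; [exact Hn|split; [exact HJ|symmetry; now apply Hmin]].
    + right. split; [|reflexivity]. intros n Hn HJ. apply HnJ. now exists n.
Qed.

Lemma Kval_off_image y m :
  ~ (exists x, f x = y) -> (1 <= m)%nat -> exists r, 0 < r /\ Kval f m y r.
Proof.
  intros Hy Hm. exists (Rmin 1 (INR 1 / INR m)). split.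
  - apply le_INR in Hm. simpl in *.
    apply Rmin_glb_lt; [lra|]. apply Rdiv_lt_0_compat; lra.
  - left. exists 1%nat. repeat split; [lia|now exists y|].
    intros [z Hz]. apply Hy. now exists z.
Qed.

Lemma tau2_open_ge0 U x : tau2_open f U -> 0 <= U x.
Proof. intros [S HS]. apply (HS x). now left. Qed.

Lemma tau2_open_full : tau2_open f (fun _ => 1).
Proof.
  exists (fun m => m = 1%nat). intros x. split.
  - intros r [->|[m [_ [-> HK]]]]; [lra|]. apply Kval_one in HK. lra.
  - intros b Hb. apply Hb. right. exists 1%nat.
    repeat split; [lia|]. now apply Kval_one.
Qed.

Lemma tau2_open_const_onto U : onto -> tau2_open f U -> forall x z, U x = U z.
Proof.
  assert (Hle : onto -> tau2_open f U -> forall x z, U x <= U z).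
  { intros Hon [S HS] x z. apply (HS x).
    intros r Hr. apply (HS z).
    destruct Hr as [->|[m [Hm [Sm HK]]]]; [now left|].
    right. exists m. repeat split; try assumption.
    apply (Kval_onto Hon). now apply (Kval_onto Hon) in HK. }
  intros Hon HU x z. apply Rle_antisym; now apply Hle.
Qed.

Lemma tau2_open_vanish_off_image U y :
  ~ (exists x, f x = y) -> tau2_open f U -> U y <= 0 -> forall x, U x <= 0.
Proof.
  intros Hy [S HS] Uy x. apply (HS x).
  intros r [->|[m [Hm [Sm _]]]]; [lra|].
  destruct (Kval_off_image y m Hy Hm) as [s [Hs HK]].
  assert (s <= U y) by (apply (HS y); right; exists m; auto).
  lra.
Qed.

Lemma fuzzy_image_ge A V x : is_fuzzy_image f A V -> A x <= V (f x).
Proof. intros HV. apply (HV (f x)). right. now exists x. Qed.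

Lemma fuzzy_image_off_image A V y :
  is_fuzzy_image f A V -> ~ (exists x, f x = y) -> V y <= 0.
Proof.
  intros HV Hy. apply (HV y).
  intros r [->|[x [Hx _]]]; [lra|]. exfalso; apply Hy; now exists x.
Qed.

Lemma fuzzy_image_const_onto U :
  onto -> (forall x, 0 <= U x) -> (forall x z, U x = U z) -> is_fuzzy_image f U U.
Proof.
  intros Hon H0 Hc y. split.
  - intros r [->|[x [_ ->]]]; [apply H0|now rewrite (Hc x y)].
  - intros b Hb. destruct (Hon y) as [x Hx]. rewrite (Hc y x).
    apply Hb. right. now exists x.
Qed.

End Tau2.

Theorem theorem2p10 (X : Type) (x0 : X) (f : X -> X) :
  tau2_open_map f <-> (forall y : X, exists x : X, f x = y).
Proof.
  split.
  - intros Hopen y. apply NNPP. intros Hy.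
    destruct (Hopen _ (tau2_open_full X f)) as [V [HV HVopen]].
    assert (Hzero := tau2_open_vanish_off_image X f V y Hy HVopen
                       (fuzzy_image_off_image X f _ V y HV Hy) (f x0)).
    assert (Hone := fuzzy_image_ge X f _ V x0 HV).
    simpl in Hone. lra.
  - intros Hon U HU. exists U. split; [|exact HU].
    apply fuzzy_image_const_onto; [exact Hon| |].
    + intros x. now apply (tau2_open_ge0 X f).
    + now apply (tau2_open_const_onto X f).
Qed.
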